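(* Let $(X,\tau_1,\tau_2)$ be a bitopological space, $i,j\in\{1,2\}$, $i\neq j$, which is $(i,j)$-almost regular, $(i,j)_1$-almost paralindelöf and a $j$-$P$-space. Then every cover $\mathcal U$ of $X$ by $(i,j)$-regular open sets has a refinement which is a cover of $X$, is $j$-locally countable, and consists of $(j,i)$-regular closed sets (sets $F$ with $F=j\text{-}\mathrm{cl}(i\text{-}\mathrm{int}(F))$).
   Context: $(X,\tau_1,\tau_2)$ is a bitopological space and $i,j\in\{1,2\}$, $i\neq j$. For $k\in\{1,2\}$, $k\text{-}\mathrm{int}$ and $k\text{-}\mathrm{cl}$ denote interior and closure with respect to $\tau_k$; ''$k$-open'' means $\tau_k$-open. A set $A$ is $(i,j)$-regular open if $A=i\text{-}\mathrm{int}(j\text{-}\mathrm{cl}(A))$. $X$ is $(i,j)$-almost regular if for each $x\in X$ and each $(i,j)$-regular open set $U$ containing $x$ there is an $(i,j)$-regular open set $V$ with $x\in V\subseteq j\text{-}\mathrm{cl}(V)\subseteq U$. A family $\mathcal V$ refines $\mathcal U$ if each member of $\mathcal V$ is contained in some member of $\mathcal U$; a family is a cover of $X$ if its union is $X$. A family is $k$-locally countable if every $x\in X$ has a $k$-open neighbourhood meeting at most countably many of its members. $X$ is a $k$-$P$-space if every intersection of countably many $k$-open sets is $k$-open. $X$ is $(i,j)_1$-almost paralindelöf if for every cover $\mathcal U$ of $X$ by $i$-open sets there is a $j$-locally countable family $\mathcal V$ of $i$-open sets refining $\mathcal U$ such that $X=\bigcup\{j\text{-}\mathrm{cl}(V):V\in\mathcal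 V\}$. *)

From Stdlib Require Import Classical.

Set Implicit Arguments.

Definition set (X : Type) := X -> Prop.

Record topology (X : Type) := {
  is_open : set X -> Prop;
  open_full : is_open (fun _ => True);
  open_inter : forall A B, is_open A -> is_open B -> is_open (fun x => A x /\ B x);
  open_union : forall F : set (set X), (forall A, F A -> is_open A) ->
                 is_open (fun x => exists A, F A /\ A x)
}.

Definition subset {X} (A B : set X) := forall x, A x -> B x.
Definition set_eq {X} (A B : set X) := forall x, A x <-> B x.

Definition interior {X} (t : topology X) (A : set X) : set X :=
  fun x => exists U, is_open t U /\ subset U A /\ U x.
Definition closure {X} (t : topology X) (A : set X) : set X :=
  fun x => forall F, is_open t (fun y => ~ F y) -> subset A F -> F x.

(* (i,j)-regular open, with ti = tau_i, tj = tau_j *)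
Definition regular_open {X} (ti tj : topology X) (A : set X) :=
  set_eq A (interior ti (closure tj A)).
Definition regular_closed {X} (tj ti : topology X) (F : set X) :=
  set_eq F (closure tj (interior ti F)).

Definition almost_regular {X} (ti tj : topology X) :=
  forall x U, regular_open ti tj U -> U x ->
    exists V, regular_open ti tj V /\ V x /\ subset (closure tj V) U.

Definition refines {X} (V U : set (set X)) :=
  forall B, V B -> exists A, U A /\ subset B A.

Definition covers {X} (U : set (set X)) :=
  forall x, exists A, U A /\ A x.

Definition countable {T} (S : set T) :=
  exists f : T -> nat, forall a b, S a -> S b -> f a = f b -> a = b.

Definition locally_countable {X} (t : topology X) (V : set (set X)) :=
  forall x, exists W, is_open t W /\ W x /\
    countable (fun B => V B /\ exists y, W y /\ B y).

Definition P_space {X} (t : topology X) :=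
  forall G : nat -> set X, (forall n, is_open t (G n)) ->
    is_open t (fun x => forall n, G n x).

Definition almost_paralindelof {X} (ti tj : topology X) :=
  forall U : set (set X), (forall A, U A -> is_open ti A) -> covers U ->
    exists V : set (set X),
      (forall B, V B -> is_open ti B) /\ refines V U /\ locally_countable tj V /\
      (forall x, exists B, V B /\ closure tj B x).

(** Shrink the cover: by almost regularity the (i,j)-regular open sets whose
    j-closure lies inside a member of U still cover X, so almost
    paralindelöfness yields a j-locally countable i-open refinement V whose
    j-closures cover X.  The j-closures of the members of V answer the theorem:
    an i-open B lies in i-int (j-cl B), so j-cl B is (j,i)-regular closed, and
    a j-open set meeting j-cl B already meets B, so taking closures keeps the
    family j-locally countable. *)

From Stdlib Require Import Classical ClassicalEpsilon FunctionalExtensionality PropExtensionality.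

Lemma set_eq_eq {X} (A B : set X) : set_eq A B -> A = B.
Proof.
  intro E. apply functional_extensionality; intro x.
  apply propositional_extensionality; apply E.
Qed.

Lemma closure_mono {X} (t : topology X) (A B : set X) :
  subset A B -> subset (closure t A) (closure t B).
Proof. intros H x Hx F HF HB. apply Hx; auto. intros y Hy; auto. Qed.

Lemma subset_closure {X} (t : topology X) (A : set X) : subset A (closure t A).
Proof. intros x Hx F _ HA. auto. Qed.

Lemma closure_idem {X} (t : topology X) (A : set X) :
  subset (closure t (closure t A)) (closure t A).
Proof. intros x Hx F HF HA. apply Hx; auto. intros y Hy. apply Hy; auto. Qed.

Lemma interior_subset {X} (t : topology X) (A : set X) : subset (interior t A) A.
Proof. intros x [U [_ [H1 H2]]]. auto. Qed.

Lemma open_subset_interior {X} (t : topology X) (A B : set X) :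
  is_open t A -> subset A B -> subset A (interior t B).
Proof. intros HA HAB x Ax. exists A. auto. Qed.

Lemma open_interior {X} (t : topology X) (A : set X) : is_open t (interior t A).
Proof.
  replace (interior t A) with (fun x => exists U, (is_open t U /\ subset U A) /\ U x).
  - apply open_union. intros U [HU _]. exact HU.
  - apply set_eq_eq. intro x; split.
    + intros [U [[H1 H2] H3]]. exists U; auto.
    + intros [U [H1 [H2 H3]]]. exists U; auto.
Qed.

Lemma regular_open_open {X} (ti tj : topology X) (A : set X) :
  regular_open ti tj A -> is_open ti A.
Proof.
  intro H. replace A with (interior ti (closure tj A)).
  - apply open_interior.
  - symmetry. apply set_eq_eq. exact H.
Qed.

Lemma closure_open_regular_closed {X} (tj ti : topology X) (B : set X) :
  is_open ti B -> regular_closed tj ti (closure tj B).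
Proof.
  intros HB x; split; intro Hx.
  - eapply closure_mono; [|exact Hx].
    apply open_subset_interior; [exact HB | apply subset_closure].
  - apply closure_idem. eapply closure_mono; [|exact Hx]. apply interior_subset.
Qed.

Lemma open_meets_closure {X} (t : topology X) (W B : set X) y :
  is_open t W -> W y -> closure t B y -> exists z, W z /\ B z.
Proof.
  intros HW Wy Hc. apply NNPP; intro Hn.
  assert (Ho : is_open t (fun z => ~ ~ W z)).
  { replace (fun z => ~ ~ W z) with W; [exact HW|].
    apply set_eq_eq. intro z; split; [tauto | apply NNPP]. }
  apply (Hc (fun z => ~ W z) Ho); [|exact Wy].
  intros z Bz Wz. apply Hn. exists z; auto.
Qed.

Lemma countable_subset {T} (S S' : set T) :
  subset S S' -> countable S' -> countable S.
Proof. intros HS [f Hf]. exists f. auto. Qed.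

Lemma countable_image {A B} (f : A -> B) (S : set A) :
  countable S -> countable (fun b => exists a, S a /\ b = f a).
Proof.
  intros [g Hg].
  destruct (classic (inhabited A)) as [inh | empty].
  - set (pre := fun b => epsilon inh (fun a => S a /\ b = f a)).
    assert (Hpre : forall b, (exists a, S a /\ b = f a) -> S (pre b) /\ b = f (pre b)).
    { intros b Hb. exact (epsilon_spec inh _ Hb). }
    exists (fun b => g (pre b)). intros b b' Hb Hb' E.
    destruct (Hpre b Hb) as [Sb ->]. destruct (Hpre b' Hb') as [Sb' ->].
    f_equal. apply Hg; auto.
  - exists (fun _ => 0). intros b b' [a _]. exfalso. exact (empty (inhabits a)).
Qed.

Definition closures {X} (t : topology X) (V : set (set X)) : set (set X) :=
  fun F => exists B, V B /\ F = closure t B.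

Lemma closures_locally_countable {X} (t : topology X) (V : set (set X)) :
  locally_countable t V -> locally_countable t (closures t V).
Proof.
  intros HV x. destruct (HV x) as [W [HW [Wx Hcount]]].
  exists W. split; [exact HW | split; [exact Wx |]].
  eapply countable_subset; [| exact (countable_image (closure t) _ Hcount)].
  intros F [[B [VB ->]] [y [Wy Hy]]].
  exists B. repeat split; auto. eapply open_meets_closure; eauto.
Qed.

Lemma closures_refines {X} (t : topology X) (V W U : set (set X)) :
  refines V W -> (forall C, W C -> exists A, U A /\ subset (closure t C) A) ->
  refines (closures t V) U.
Proof.
  intros HVW HWU F [B [VB ->]]. destruct (HVW B VB) as [C [WC HBC]].
  destruct (HWU C WC) as [A [UA HCA]].
  exists A. split; [exact UA |].
  intros x Hx. apply HCA. eapply closure_mono; eauto.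
Qed.

Lemma almost_regular_shrinking_cover {X} (ti tj : topology X) (U : set (set X)) :
  almost_regular ti tj -> (forall A, U A -> regular_open ti tj A) -> covers U ->
  covers (fun V => regular_open ti tj V /\ exists A, U A /\ subset (closure tj V) A).
Proof.
  intros Har HU Hcov x. destruct (Hcov x) as [A [UA Ax]].
  destruct (Har x A (HU A UA) Ax) as [V [HV [Vx HVA]]].
  exists V. split; [split; [exact HV | exists A; auto] | exact Vx].
Qed.

Theorem mainTheorem13 (X : Type) (ti tj : topology X) :
  almost_regular ti tj -> almost_paralindelof ti tj -> P_space tj ->
  forall U : set (set X), (forall A, U A -> regular_open ti tj A) -> covers U ->
  exists V : set (set X),
    refines V U /\ covers V /\ locally_countable tj V /\
    (forall F, V F -> regular_closed tj ti F).
Proof.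
  intros Har Hpl _ U HU Hcov.
  destruct (Hpl _ (fun V HV => regular_open_open ti tj V (proj1 HV))
                (almost_regular_shrinking_cover ti tj U Har HU Hcov))
    as [V [HVopen [HVref [HVlc HVcl]]]].
  exists (closures tj V). split; [| split; [| split]].
  - apply (closures_refines tj V _ U HVref). intros C [_ HC]; exact HC.
  - intro x. destruct (HVcl x) as [B [VB Hx]].
    exists (closure tj B). split; [exists B; auto | exact Hx].
  - exact (closures_locally_countable tj V HVlc).
  - intros F [B [VB ->]]. exact (closure_open_regular_closed tj ti B (HVopen B VB)).
Qed.
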